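(* Let $C$ be a subadditive monotone normalized cost function. Then for every profile of (monotone, normalized) valuations and every tie-breaking rule among profit-maximizing bundles, the allocation $\overrightarrow{ALG}$ produced by the Sequential Mechanism satisfies $\pi(\overrightarrow{ALG})\le n\cdot\pi(\overrightarrow{OPT})$, where $\overrightarrow{OPT}$ minimizes the social cost.
   Context: Setting. $N=\{1,\dots,n\}$ is a set of players and $M_1,\dots,M_n$ are pairwise disjoint finite sets; $M=\bigcup_i M_i$; allocations $\vec S=(S_1,\dots,S_n)$ with $S_i\subseteq M_i$ are identified with subsets of $M$. A cost function is a monotone $C:2^M\to\mathbb{R}_{\ge0}$ with $C(\emptyset)=0$; subadditive: $C(S)+C(T)\ge C(S\cup T)$. Valuations $v_i:2^{M_i}\to\mathbb{R}_{\ge0}$ are monotone with $v_i(\emptyset)=0$. Sequential Mechanism (with a given tie-breaking rule): start with $ALG_i=\emptyset$ for all $i$; for $i=1,\dots,n$ in order, set $ALG_i$ to some element of $\arg\max_{S\subseteq M_i}v_i(S)-[C(\overrightarrow{ALG}\cup S)-C(\overrightarrow{ALG})]$ (with $\overrightarrow{ALG}$ the current allocation of players $1,\dots,i-1$), and charge $p_i=C(ALG_1,\dots,ALG_i)-C(ALG_1,\dots,ALG_{i-1})$. Social cost: $\pi(\vec S)=C(\vec S)+\sum_i[v_i(M_i)-v_i(S_i)]$. *)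

From HB Require Import structures.
From mathcomp Require Import all_boot all_order all_algebra.
Set Implicit Arguments. Unset Strict Implicit. Unset Printing Implicit Defensive.
Import Order.TTheory GRing.Theory Num.Theory.
Local Open Scope ring_scope.

(* Items: a finite type M; [own x] is the player owning item x, so
   M_i = [set x | own x == i]. The sets M_i are pairwise disjoint and cover M.
   Allocations (S_1..S_n) with S_i \subset M_i are identified with subsets of M. *)

Definition Mi (M : finType) (n : nat) (own : M -> 'I_n) (i : 'I_n) : {set M} :=
  [set x | own x == i].

Definition cost_fn (R : realFieldType) (M : finType) (C : {set M} -> R) : Prop :=
  C set0 = 0 /\ (forall S : {set M}, 0 <= C S) /\ (forall S T : {set M}, S \subset T -> C S <= C T).

Definition subadditive (R : realFieldType) (M : finType) (C : {set M} -> R) : Prop :=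
  forall S T : {set M}, C (S :|: T) <= C S + C T.

(* Valuation of player i: a function on subsets of M_i (values on other sets
   are irrelevant), monotone, nonnegative, v(emptyset) = 0. *)
Definition valuation (R : realFieldType) (M : finType) (Mi : {set M})
  (v : {set M} -> R) : Prop :=
  v set0 = 0 /\ (forall S : {set M}, S \subset Mi -> 0 <= v S) /\
  (forall S T : {set M}, S \subset T -> T \subset Mi -> v S <= v T).

Definition prefix_alloc (M : finType) (n : nat) (ALG : 'I_n -> {set M}) (i : 'I_n)
  : {set M} := \bigcup_(j < n | (j < i)%N) ALG j.

(* ALG is a possible run of the Sequential Mechanism (for some tie-breaking
   rule): every player i chooses a profit-maximizing bundle ALG i \subset M_i
   given the allocation of players 1..i-1. *)
Definition sequential_run (R : realFieldType) (M : finType) (n : nat)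
  (own : M -> 'I_n) (C : {set M} -> R) (v : 'I_n -> {set M} -> R)
  (ALG : 'I_n -> {set M}) : Prop :=
  forall i : 'I_n,
    ALG i \subset Mi own i /\
    forall S : {set M}, S \subset Mi own i ->
      v i S - (C (prefix_alloc ALG i :|: S) - C (prefix_alloc ALG i))
      <= v i (ALG i) - (C (prefix_alloc ALG i :|: ALG i) - C (prefix_alloc ALG i)).

Definition outcome (M : finType) (n : nat) (ALG : 'I_n -> {set M}) : {set M} :=
  \bigcup_(i < n) ALG i.

Definition social_cost (R : realFieldType) (M : finType) (n : nat)
  (own : M -> 'I_n) (C : {set M} -> R) (v : 'I_n -> {set M} -> R) (S : {set M}) : R :=
  C S + \sum_(i < n) (v i (Mi own i) - v i (S :&: Mi own i)).

From HB Require Import structures.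
From mathcomp Require Import all_boot all_order all_algebra.
From mathcomp Require Import lra.
Import Order.TTheory GRing.Theory Num.Theory.
Local Open Scope ring_scope.

(* Player i could have taken its optimal bundle OPT_i; by subadditivity this
   would have cost it at most C(OPT_i) extra, so its profit is at least
   v_i(OPT_i) - C(OPT_i).  The charges p_i telescope to C(ALG), so summing
   over i gives pi(ALG) <= sum_i C(OPT_i) + sum_i [v_i(M_i) - v_i(OPT_i)],
   and monotonicity bounds each C(OPT_i) by C(OPT). *)

Lemma sumr_le_mulr_nat (R : numDomainType) (n : nat) (F : 'I_n -> R) :
  (forall i, 0 <= F i) -> \sum_(i < n) F i <= n%:R * \sum_(i < n) F i.
Proof.
move=> F_ge0; case: n F F_ge0 => [|n] F F_ge0; first by rewrite big_ord0 mulr0.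
by apply: ler_peMl; [exact: sumr_ge0 | rewrite ler1n].
Qed.

Section SequentialRun.

Context {R : realFieldType} {M : finType} {n : nat}.
Implicit Types (C : {set M} -> R) (ALG : 'I_n -> {set M}).

Definition bundles_before ALG (k : nat) : {set M} :=
  \bigcup_(j < n | (j < k)%N) ALG j.

Lemma bundles_before0 ALG : bundles_before ALG 0 = set0.
Proof. exact: big_pred0. Qed.

Lemma bundles_before_n ALG : bundles_before ALG n = outcome ALG.
Proof. by apply: eq_bigl => j; rewrite ltn_ord. Qed.

Lemma bundles_beforeS ALG (i : 'I_n) :
  bundles_before ALG i :|: ALG i = bundles_before ALG i.+1.
Proof.
rewrite /bundles_before [RHS](bigD1 i) //= setUC; congr (_ :|: _).
by apply: eq_bigl => j; rewrite ltnS ltn_neqAle andbC.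
Qed.

Lemma sum_marginal_costs C ALG :
  \sum_(i < n) (C (bundles_before ALG i.+1) - C (bundles_before ALG i))
  = C (outcome ALG) - C set0.
Proof.
rewrite -(big_mkord xpredT
  (fun i => C (bundles_before ALG i.+1) - C (bundles_before ALG i))).
by rewrite telescope_sumr // bundles_before_n bundles_before0.
Qed.

Lemma outcome_restrict (own : M -> 'I_n) ALG (i : 'I_n) :
  (forall j, ALG j \subset Mi own j) -> outcome ALG :&: Mi own i = ALG i.
Proof.
move=> ALG_own; apply/setP => x; rewrite inE.
apply/andP/idP => [[/bigcupP [j _ xj] xi] | xi]; last first.
  by split; [apply/bigcupP; exists i | exact: subsetP (ALG_own i) x xi].
have xj' := subsetP (ALG_own j) x xj.
by move: xj' xi; rewrite !inE => /eqP -> /eqP <-.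
Qed.

Lemma sequential_profit_ge (own : M -> 'I_n) C (v : 'I_n -> {set M} -> R) ALG
    (i : 'I_n) (S : {set M}) :
  subadditive C -> sequential_run own C v ALG -> S \subset Mi own i ->
  v i S - C S <=
  v i (ALG i) - (C (bundles_before ALG i.+1) - C (bundles_before ALG i)).
Proof.
move=> Csub run S_own; have [_ best] := run i.
have := best S S_own; rewrite /prefix_alloc -/(bundles_before ALG i).
rewrite bundles_beforeS.
have := Csub (bundles_before ALG i) S; lra.
Qed.

Lemma sum_cost_restrict_le (own : M -> 'I_n) C (T : {set M}) :
  cost_fn C -> \sum_(i < n) C (T :&: Mi own i) <= n%:R * C T.
Proof.
move=> [_ [_ Cmon]].
apply: le_trans (ler_sum _ (fun i _ => Cmon _ _ (subsetIl T (Mi own i)))) _.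
by rewrite sumr_const card_ord mulr_natl.
Qed.

Lemma social_cost_outcome_le (own : M -> 'I_n) C (v : 'I_n -> {set M} -> R)
    ALG (T : {set M}) :
  cost_fn C -> subadditive C -> sequential_run own C v ALG ->
  social_cost own C v (outcome ALG) <=
  \sum_(i < n) C (T :&: Mi own i)
  + \sum_(i < n) (v i (Mi own i) - v i (T :&: Mi own i)).
Proof.
move=> [C0 _] Csub run.
have profits : \sum_(i < n) (v i (T :&: Mi own i) - C (T :&: Mi own i)) <=
    \sum_(i < n) (v i (ALG i) -
      (C (bundles_before ALG i.+1) - C (bundles_before ALG i))).
  by apply: ler_sum => i _; apply: sequential_profit_ge => //; exact: subsetIr.
rewrite [X in _ <= X]sumrB sum_marginal_costs C0 subr0 sumrB in profits.
have ALG_own j : ALG j \subset Mi own j by have [] := run j.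
rewrite /social_cost; under eq_bigr => i _ do rewrite outcome_restrict //.
rewrite !sumrB; lra.
Qed.

End SequentialRun.

Theorem lemma7p3 (R : realFieldType) (M : finType) (n : nat) (own : M -> 'I_n)
  (C : {set M} -> R) (v : 'I_n -> {set M} -> R)
  (ALG : 'I_n -> {set M}) (OPT : {set M}) :
  cost_fn C -> subadditive C ->
  (forall i, valuation (Mi own i) (v i)) ->
  sequential_run own C v ALG ->
  (forall T : {set M}, social_cost own C v OPT <= social_cost own C v T) ->
  social_cost own C v (outcome ALG) <= n%:R * social_cost own C v OPT.
Proof.
move=> Ccost Csub val run _.
have deficit_ge0 i : 0 <= v i (Mi own i) - v i (OPT :&: Mi own i).
  by have [_ [_ vmon]] := val i; rewrite subr_ge0 vmon ?subsetIr.
apply: le_trans (social_cost_outcome_le own C v ALG OPT Ccost Csub run) _.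
rewrite /social_cost mulrDr lerD ?sum_cost_restrict_le //.
exact: sumr_le_mulr_nat.
Qed.
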